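(* Let $a,b,c\in\mathbb C$ with $c=a-b+1$. If $a$ is a negative integer, assume $c\notin\{a,a+1,\dots,0,1\}$; otherwise assume $2-c\notin\{1,2,3,\dots\}$. Set \[ f(z)=F(a,b+1;c+1;z),\quad g(z)=F(a,b-1;c-1;z),\quad h(z)=F(a,b;c;z). \] Then \[ z\big(f(z)g'(z)-f'(z)g(z)\big)=c\big(f(z)g(z)-h(z)^2\big) \] for all $z\in\mathbb C$ when $a$ is a negative integer, and for all $z\in\mathbb D$ otherwise.
   Context: The hypergeometric function is $F(a,b;c;z)=\sum_{k\ge0}\frac{(a)_k(b)_k}{(c)_k}\frac{z^k}{k!}$, where $(x)_0=1$ and $(x)_k=x(x+1)\cdots(x+k-1)$. It is defined for $|z|<1$ when $1-c\notin\{1,2,\dots\}$; when $a=-n$ with $n\in\mathbb N$ the series terminates at $k=n$ and defines a polynomial for all $z\in\mathbb C$ whenever $c\notin\{0,-1,\dots,1-n\}$. $\mathbb D=\{|z|<1\}$. *)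

From Stdlib Require Import Reals Factorial.
From Coquelicot Require Import Coquelicot.

Fixpoint poch (x : C) (k : nat) : C :=
  match k with
  | O => 1%C
  | S k' => (poch x k' * (x + RtoC (INR k')))%C
  end.

Definition hyp_term (a b c z : C) (k : nat) : C :=
  (poch a k * poch b k / poch c k * z ^ k / RtoC (INR (fact k)))%C.

(* F(a,b;c;z) = sum_{k>=0} hyp_term; the complex series is summed
   componentwise (real and imaginary parts), which equals the complex
   sum wherever the series converges. *)
Definition hypF (a b c z : C) : C :=
  (Series (fun k => Re (hyp_term a b c z k)),
   Series (fun k => Im (hyp_term a b c z k))).

(* Everything is reduced to identities between Taylor
   coefficients.  (1) Under a single nondegeneracy condition on (a, c)
   ([admissible]), five contiguous relations between h, f, g, their
   derivatives and z-multiples hold coefficientwise ([contiguous_A] ...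
   [contiguous_R2]).  (2) A purely algebraic elimination
   ([wronskian_elimination]) derives the identity from these five relations,
   using c = a - b + 1 and either b <> 0 or z <> 1.  (3) A small theory of
   complex power series transfers coefficient relations to sums and proves
   term-by-term differentiation under a weighted summability condition
   ([psum_derive]).  (4) This condition holds for every r when the series
   terminate, and for r < 1 by a ratio test otherwise
   ([weighted_summable_hypcoef]). *)

From Stdlib Require Import Reals Classical Factorial Lra Lia.
From Coquelicot Require Import Coquelicot.

Open Scope C_scope.
Set Bullet Behavior "Strict Subproofs".

Lemma RtoC_INR_S k : RtoC (INR (S k)) = RtoC (INR k) + 1.
Proof. rewrite S_INR, RtoC_plus. reflexivity. Qed.

Lemma RtoC_neq0 (x : R) : x <> 0%R -> RtoC x <> 0.
Proof. intros Hx E. apply Hx. apply (f_equal fst) in E. exact E. Qed.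

Lemma RtoC_INR_S_neq0 k : RtoC (INR k) + 1 <> 0.
Proof. rewrite <- RtoC_INR_S. apply RtoC_neq0, not_0_INR. discriminate. Qed.

Lemma RtoC_fact_neq0 k : RtoC (INR (fact k)) <> 0.
Proof. apply RtoC_neq0, INR_fact_neq_0. Qed.

Lemma RtoC_fact_S k :
  RtoC (INR (fact (S k))) = (RtoC (INR k) + 1) * RtoC (INR (fact k)).
Proof.
  change (fact (S k)) with (S k * fact k)%nat.
  rewrite mult_INR, RtoC_mult, RtoC_INR_S. reflexivity.
Qed.

Lemma Cmod_INR k : Cmod (RtoC (INR k)) = INR k.
Proof. rewrite Cmod_R, Rabs_pos_eq; auto using pos_INR. Qed.

Lemma Cmult_integral (x y : C) : x * y = 0 -> x = 0 \/ y = 0.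
Proof.
  intros E. destruct (classic (x = 0)) as [|Hx]; auto.
  destruct (classic (y = 0)) as [|Hy]; auto.
  exfalso. exact (Cmult_neq_0 x y Hx Hy E).
Qed.

Lemma Cmult_neq0_inv (x y : C) : x * y <> 0 -> x <> 0 /\ y <> 0.
Proof. intros H. split; intros E; apply H; rewrite E; ring. Qed.

Lemma poch_S x k : poch x (S k) = poch x k * (x + RtoC (INR k)).
Proof. reflexivity. Qed.

Lemma poch_shift x k : poch x (S k) = x * poch (x + 1) k.
Proof.
  induction k as [|k IH].
  - simpl. ring.
  - rewrite poch_S, IH, poch_S, RtoC_INR_S. ring.
Qed.

Lemma poch_shift_up x k : x * poch (x + 1) k = poch x k * (x + RtoC (INR k)).
Proof. rewrite <- poch_shift. reflexivity. Qed.

Lemma poch_pred_S x k : poch (x - 1) (S k) = (x - 1) * poch x k.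
Proof. rewrite poch_shift. replace (x - 1 + 1) with x by ring. reflexivity. Qed.

Lemma poch_eq0 x m j : (j < m)%nat -> x + RtoC (INR j) = 0 -> poch x m = 0.
Proof.
  induction m as [|m IH]; intros Hj E; [lia|].
  rewrite poch_S. destruct (Nat.eq_dec j m) as [->|Hne].
  - rewrite E. ring.
  - rewrite IH by (auto; lia). ring.
Qed.

Lemma poch_neq0 x m :
  (forall j, (j < m)%nat -> x + RtoC (INR j) <> 0) -> poch x m <> 0.
Proof.
  induction m as [|m IH]; intros H.
  - apply RtoC_neq0. lra.
  - rewrite poch_S. apply Cmult_neq_0; auto.
Qed.

Lemma poch_last_root x k : poch x (S k) = 0 -> poch x k <> 0 -> x = - RtoC (INR k).
Proof.
  intros H0 H. rewrite poch_S in H0.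
  destruct (Cmult_integral _ _ H0) as [E|E]; [contradiction|].
  replace x with (x + RtoC (INR k) - RtoC (INR k)) by ring. rewrite E. ring.
Qed.

Definition hypcoef (a b c : C) (k : nat) : C :=
  poch a k * poch b k / poch c k / RtoC (INR (fact k)).

Lemma hypcoef_0 a b c : hypcoef a b c 0 = 1.
Proof. unfold hypcoef. simpl. field. Qed.

Lemma hypcoef_succ a b c k : poch c (S k) <> 0 ->
  hypcoef a b c (S k) * ((c + RtoC (INR k)) * (RtoC (INR k) + 1))
  = hypcoef a b c k * ((a + RtoC (INR k)) * (b + RtoC (INR k))).
Proof.
  intros H. rewrite poch_S in H. destruct (Cmult_neq0_inv _ _ H) as [H1 H2].
  unfold hypcoef. rewrite !poch_S, RtoC_fact_S.
  field. repeat split; auto using RtoC_fact_neq0, RtoC_INR_S_neq0.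
Qed.

Lemma hypcoef_vanish a b c k : poch a k = 0 -> hypcoef a b c k = 0.
Proof. intros H. unfold hypcoef. rewrite H. unfold Cdiv. ring. Qed.

(* Coefficient operators: if u are the Taylor coefficients of F, then
   [deriv_coef u], [euler_coef u] and [shift_coef u] are those of F',
   z F' and z F respectively. *)
Definition deriv_coef (u : nat -> C) (k : nat) : C := RtoC (INR (S k)) * u (S k).

Definition euler_coef (u : nat -> C) (k : nat) : C := RtoC (INR k) * u k.

Definition shift_coef (u : nat -> C) (k : nat) : C :=
  match k with O => 0 | S j => u j end.

(* The pair (a, c) is admissible when every
   index k with (a)_k <> 0 has (c-1) c (c+1) ... (c+k) <> 0, i.e.
   (c-1)_{k+2} <> 0.  This is exactly what makes all denominators of
   F(a,b;c), F(a,b+1;c+1) and F(a,b-1;c-1) that matter nonzero, and it is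
   what both hypotheses of the theorem provide. *)
Definition admissible (a c : C) : Prop :=
  forall k, poch a k <> 0 -> poch (c - 1) (S (S k)) <> 0.

Section Admissible.
Variables a c : C.
Hypothesis Hadm : admissible a c.

Lemma admissible_denominators k : poch a k <> 0 ->
  c - 1 <> 0 /\ c <> 0 /\ c - 1 + RtoC (INR k) <> 0 /\ c + RtoC (INR k) <> 0 /\
  poch (c - 1) k <> 0 /\ poch c k <> 0 /\ poch (c + 1) k <> 0.
Proof.
  intros Ha. pose proof (Hadm k Ha) as H.
  assert (E1 : poch (c - 1) (S (S k))
             = poch (c - 1) k * (c - 1 + RtoC (INR k)) * (c + RtoC (INR k))).
  { rewrite !poch_S, RtoC_INR_S. ring. }
  assert (E2 : poch (c - 1) (S (S k)) = (c - 1) * (poch c k * (c + RtoC (INR k)))).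
  { rewrite poch_shift, poch_S. replace (c - 1 + 1) with c by ring. reflexivity. }
  assert (E3 : poch (c - 1) (S (S k)) = (c - 1) * (c * poch (c + 1) k)).
  { rewrite !poch_shift. replace (c - 1 + 1) with c by ring. reflexivity. }
  rewrite E1 in H. destruct (Cmult_neq0_inv _ _ H) as [H1 Hck].
  destruct (Cmult_neq0_inv _ _ H1) as [Hpm Hcmk].
  pose proof (Hadm k Ha) as H'. rewrite E2 in H'.
  destruct (Cmult_neq0_inv _ _ H') as [Hc1 H2].
  destruct (Cmult_neq0_inv _ _ H2) as [Hpc _].
  pose proof (Hadm k Ha) as H''. rewrite E3 in H''.
  destruct (Cmult_neq0_inv _ _ H'') as [_ H3].
  destruct (Cmult_neq0_inv _ _ H3) as [Hc0 Hpc1].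
  tauto.
Qed.

Lemma admissible_c_neq0 : c <> 0 /\ c - 1 <> 0.
Proof.
  destruct (admissible_denominators 0) as (H1 & H0 & _); [apply RtoC_neq0; lra|].
  auto.
Qed.

Lemma admissible_succ k : poch a (S k) <> 0 -> c + 1 + RtoC (INR k) <> 0.
Proof.
  intros Ha. pose proof (Hadm (S k) Ha) as H.
  rewrite poch_S, !RtoC_INR_S in H. destruct (Cmult_neq0_inv _ _ H) as [_ Hk].
  intros E. apply Hk. rewrite <- E. ring.
Qed.

End Admissible.

(* For a = -(n+1) the series terminate at k = n+1, and excluding
   c = a, a+1, ..., a+n+2 = 1 is exactly admissibility. *)
Lemma admissible_negative_integer (a c : C) (n : nat) :
  a = RtoC (- INR (S n)) ->
  (forall k : nat, (k <= S (S n))%nat -> c <> a + RtoC (INR k)) ->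
  admissible a c.
Proof.
  intros Ha Hk k Hpk. apply poch_neq0. intros j Hj E.
  assert (Hroot : a + RtoC (INR (S n)) = 0) by (rewrite Ha, RtoC_opp; ring).
  assert (Hkn : (k <= S n)%nat).
  { destruct (Nat.le_gt_cases k (S n)) as [|Hlt]; auto.
    exfalso. exact (Hpk (poch_eq0 a k (S n) Hlt Hroot)). }
  apply (Hk (S (S n) - j)%nat); [lia|].
  replace c with (c - 1 + RtoC (INR j) + (1 - RtoC (INR j))) by ring.
  rewrite E, Ha, minus_INR, !S_INR by lia. rewrite RtoC_opp, !RtoC_minus, !RtoC_plus. ring.
Qed.

Lemma poch_pred_nonvanishing (c : C) :
  (forall m : nat, 2 - c <> RtoC (INR (S m))) -> forall m, poch (c - 1) m <> 0.
Proof.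
  intros Hm m. apply poch_neq0. intros j _ E. apply (Hm j).
  replace c with (c - 1 + RtoC (INR j) + (1 - RtoC (INR j))) by ring.
  rewrite E, RtoC_INR_S. ring.
Qed.

Section Contiguous.
Variables a b c : C.
Hypothesis Hadm : admissible a c.

Lemma poch_c_plus1 k : poch (c + 1) k = poch c k * (c + RtoC (INR k)) / c.
Proof.
  rewrite <- poch_shift_up. field. exact (proj1 (admissible_c_neq0 a c Hadm)).
Qed.

(* With
   h = F(a,b;c), f = F(a,b+1;c+1), g = F(a,b-1;c-1) they read
     (A)  c (1-z) h' = b c h - b (c-a) f
     (B)  (c-1) g = (c-1) h + z (1-z) h' - a z h
     (C)  z (1-z) f' = c h - c f + a z f
     (R1) b z f' + b c f = c b h + c z h'
     (R2) (c-1) z g' + (c-1)(b-1) g = (b-1)(c-1) h + (b-1) z h'.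
   Each is checked coefficientwise; the case (a)_{k+1} = 0 is treated
   separately since then a = -k and the coefficient of index k+1 vanishes. *)
Lemma contiguous_A k :
  c * deriv_coef (hypcoef a b c) k - c * euler_coef (hypcoef a b c) k
  - b * c * hypcoef a b c k + b * (c - a) * hypcoef a (b + 1) (c + 1) k = 0.
Proof.
  unfold deriv_coef, euler_coef, hypcoef.
  replace (b * (c - a) * (poch a k * poch (b + 1) k / poch (c + 1) k / RtoC (INR (fact k))))
    with ((c - a) * poch a k * (b * poch (b + 1) k) / poch (c + 1) k / RtoC (INR (fact k)))
    by (unfold Cdiv; ring).
  rewrite poch_shift_up, poch_c_plus1.
  destruct (classic (poch a k = 0)) as [Ha0|Ha0].
  { rewrite poch_S, Ha0. unfold Cdiv; ring. }
  destruct (admissible_denominators a c Hadm k Ha0) as (N1 & N2 & N3 & N4 & N5 & N6 & N7).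
  destruct (classic (poch a (S k) = 0)) as [HA|HA].
  - rewrite HA, (poch_last_root a k HA Ha0), (poch_S c).
    field. repeat split; auto using RtoC_fact_neq0.
  - rewrite !poch_S, RtoC_fact_S, RtoC_INR_S.
    field. repeat split; auto using RtoC_fact_neq0, RtoC_INR_S_neq0.
Qed.

Lemma contiguous_B k :
  (c - 1) * hypcoef a (b - 1) (c - 1) k - (c - 1) * hypcoef a b c k
  - euler_coef (hypcoef a b c) k + shift_coef (euler_coef (hypcoef a b c)) k
  + a * shift_coef (hypcoef a b c) k = 0.
Proof.
  destruct k as [|k].
  { simpl shift_coef. unfold euler_coef. rewrite !hypcoef_0. simpl. ring. }
  unfold shift_coef, euler_coef, hypcoef.
  rewrite (poch_pred_S b), (poch_pred_S c), (poch_S b), (poch_S c), RtoC_fact_S, RtoC_INR_S.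
  destruct (classic (poch a k = 0)) as [Ha0|Ha0].
  { rewrite poch_S, Ha0. unfold Cdiv; ring. }
  destruct (admissible_denominators a c Hadm k Ha0) as (N1 & N2 & N3 & N4 & N5 & N6 & N7).
  destruct (classic (poch a (S k) = 0)) as [HA|HA].
  - rewrite HA, (poch_last_root a k HA Ha0).
    field. repeat split; auto using RtoC_fact_neq0, RtoC_INR_S_neq0.
  - rewrite !poch_S.
    field. repeat split; auto using RtoC_fact_neq0, RtoC_INR_S_neq0.
Qed.

Lemma contiguous_C k :
  euler_coef (hypcoef a (b + 1) (c + 1)) k
  - shift_coef (euler_coef (hypcoef a (b + 1) (c + 1))) k
  + c * hypcoef a (b + 1) (c + 1) k - a * shift_coef (hypcoef a (b + 1) (c + 1)) k
  - c * hypcoef a b c k = 0.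
Proof.
  destruct k as [|k].
  { simpl shift_coef. unfold euler_coef. rewrite !hypcoef_0. simpl. ring. }
  unfold shift_coef, euler_coef, hypcoef.
  rewrite (poch_S (b + 1)), (poch_S (c + 1)), (poch_shift b), (poch_S c), RtoC_fact_S,
    RtoC_INR_S, !poch_c_plus1.
  destruct (classic (poch a k = 0)) as [Ha0|Ha0].
  { rewrite poch_S, Ha0. unfold Cdiv; ring. }
  destruct (admissible_denominators a c Hadm k Ha0) as (N1 & N2 & N3 & N4 & N5 & N6 & N7).
  destruct (classic (poch a (S k) = 0)) as [HA|HA].
  - rewrite HA, (poch_last_root a k HA Ha0).
    unfold Cdiv; rewrite ?Cmult_0_l, ?Cmult_0_r.
    field. repeat split; auto using RtoC_fact_neq0, RtoC_INR_S_neq0.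
  - pose proof (admissible_succ a c Hadm k HA) as N8.
    rewrite !poch_S.
    field. repeat split; auto using RtoC_fact_neq0, RtoC_INR_S_neq0.
Qed.

Lemma contiguous_R1 k :
  b * euler_coef (hypcoef a (b + 1) (c + 1)) k + b * c * hypcoef a (b + 1) (c + 1) k
  - c * b * hypcoef a b c k - c * euler_coef (hypcoef a b c) k = 0.
Proof.
  unfold euler_coef, hypcoef.
  replace (b * (RtoC (INR k) * (poch a k * poch (b + 1) k / poch (c + 1) k / RtoC (INR (fact k))))
    + b * c * (poch a k * poch (b + 1) k / poch (c + 1) k / RtoC (INR (fact k))))
    with ((RtoC (INR k) + c) * poch a k * (b * poch (b + 1) k) / poch (c + 1) k
          / RtoC (INR (fact k)))
    by (unfold Cdiv; ring).
  rewrite poch_shift_up, poch_c_plus1.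
  destruct (classic (poch a k = 0)) as [Ha0|Ha0].
  { rewrite Ha0. unfold Cdiv; ring. }
  destruct (admissible_denominators a c Hadm k Ha0) as (N1 & N2 & N3 & N4 & N5 & N6 & N7).
  field. repeat split; auto using RtoC_fact_neq0.
Qed.

Lemma contiguous_R2 k :
  (c - 1) * (b - 1) * hypcoef a (b - 1) (c - 1) k
  + (c - 1) * euler_coef (hypcoef a (b - 1) (c - 1)) k
  - (b - 1) * (c - 1) * hypcoef a b c k - (b - 1) * euler_coef (hypcoef a b c) k = 0.
Proof.
  unfold euler_coef, hypcoef.
  replace ((c - 1) * (b - 1) * (poch a k * poch (b - 1) k / poch (c - 1) k / RtoC (INR (fact k)))
    + (c - 1) * (RtoC (INR k) * (poch a k * poch (b - 1) k / poch (c - 1) k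
                                 / RtoC (INR (fact k)))))
    with ((c - 1) * poch a k * (poch (b - 1) k * (b - 1 + RtoC (INR k))) / poch (c - 1) k
          / RtoC (INR (fact k)))
    by (unfold Cdiv; ring).
  rewrite <- poch_S, poch_pred_S.
  destruct (classic (poch a k = 0)) as [Ha0|Ha0].
  { rewrite Ha0. unfold Cdiv; ring. }
  destruct (admissible_denominators a c Hadm k Ha0) as (N1 & N2 & N3 & N4 & N5 & N6 & N7).
  replace (poch (c - 1) k) with ((c - 1) * poch c k / (c - 1 + RtoC (INR k))).
  2: { rewrite <- poch_pred_S, poch_S. field. exact N3. }
  field. repeat split; auto using RtoC_fact_neq0.
Qed.

End Contiguous.

(* The algebraic heart of the proof: with c = a - b + 1, relations (A), (B),
   (R2) together with (R1) (multiplied by b) or (C) (multiplied by 1-z)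
   eliminate h' and yield the Wronskian identity.  The two explicit linear
   combinations below are the certificates. *)
Lemma wronskian_elimination (a b c z f g h fp gp hp : C) :
  c = a - b + 1 -> c - 1 <> 0 -> (b <> 0 \/ 1 - z <> 0) ->
  c * hp - c * (z * hp) - b * c * h + b * (c - a) * f = 0 ->
  (c - 1) * g - (c - 1) * h - z * hp + z * (z * hp) + a * (z * h) = 0 ->
  z * fp - z * (z * fp) + c * f - a * (z * f) - c * h = 0 ->
  b * (z * fp) + b * c * f - c * b * h - c * (z * hp) = 0 ->
  (c - 1) * (b - 1) * g + (c - 1) * (z * gp) - (b - 1) * (c - 1) * h - (b - 1) * (z * hp) = 0 ->
  z * (f * gp - fp * g) = c * (f * g - h * h).
Proof.
  intros Ec Hc1 Hnd.
  set (RA := c * hp - c * (z * hp) - b * c * h + b * (c - a) * f).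
  set (RB := (c - 1) * g - (c - 1) * h - z * hp + z * (z * hp) + a * (z * h)).
  set (RC := z * fp - z * (z * fp) + c * f - a * (z * f) - c * h).
  set (R1 := b * (z * fp) + b * c * f - c * b * h - c * (z * hp)).
  set (R2 := (c - 1) * (b - 1) * g + (c - 1) * (z * gp) - (b - 1) * (c - 1) * h
             - (b - 1) * (z * hp)).
  intros HA HB HC HR1 HR2.
  set (W := z * (f * gp - fp * g) - c * (f * g - h * h)).
  assert (Ib : b * (c - 1) * W = b * f * R2 - (c - 1) * g * R1
             - (b * (b - 1) * f + b * c * h + c * z * hp) * RB - z * (z * hp + a * h) * RA).
  { unfold W, RA, RB, R1, R2. subst c. ring. }
  assert (Iz : (1 - z) * (c - 1) * W = (1 - z) * f * R2 - (c - 1) * g * RC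
             + (- (1 - z) * (b - 1) * f - c * h + (c - a * z) * f - (1 - z) * c * f) * RB
             - z * h * RA).
  { unfold W, RA, RB, RC, R2. subst c. ring. }
  rewrite HA, HB, HC, HR1, HR2 in *.
  assert (HW : W = 0).
  { destruct Hnd as [Hn|Hn].
    - assert (E : b * (c - 1) * W = 0) by (rewrite Ib; ring).
      destruct (Cmult_integral _ _ E) as [E'|]; auto.
      destruct (Cmult_integral _ _ E'); tauto.
    - assert (E : (1 - z) * (c - 1) * W = 0) by (rewrite Iz; ring).
      destruct (Cmult_integral _ _ E) as [E'|]; auto.
      destruct (Cmult_integral _ _ E'); tauto. }
  replace (z * (f * gp - fp * g)) with (W + c * (f * g - h * h)) by (unfold W; ring).
  rewrite HW. ring.
Qed.

Definition has_psum (u : nat -> C) (z l : C) : Prop :=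
  @is_series C_AbsRing C_NormedModule (fun k => u k * z ^ k) l.

Definition psum (u : nat -> C) (z : C) : C :=
  (Series (fun k => Re (u k * z ^ k)), Series (fun k => Im (u k * z ^ k))).

Lemma hypF_psum a b c z : hypF a b c z = psum (hypcoef a b c) z.
Proof.
  unfold hypF, psum. f_equal; apply Series_ext; intros k; f_equal;
  unfold hyp_term, hypcoef, Cdiv; ring.
Qed.

Lemma sum_n_Re (u : nat -> C) n :
  sum_n (fun k => Re (u k)) n = Re (@sum_n C_AbelianMonoid u n).
Proof.
  induction n as [|n IH].
  - rewrite !sum_O. reflexivity.
  - rewrite !sum_Sn, IH. reflexivity.
Qed.

Lemma sum_n_Im (u : nat -> C) n :
  sum_n (fun k => Im (u k)) n = Im (@sum_n C_AbelianMonoid u n).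
Proof.
  induction n as [|n IH].
  - rewrite !sum_O. reflexivity.
  - rewrite !sum_Sn, IH. reflexivity.
Qed.

Lemma is_series_Re (u : nat -> C) (l : C) :
  @is_series C_AbsRing C_NormedModule u l -> is_series (fun k => Re (u k)) (Re l).
Proof.
  intros H. apply filterlim_ext with (fun n => Re (sum_n u n)).
  - intros n. rewrite sum_n_Re. reflexivity.
  - eapply filterlim_comp; [exact H|].
    apply filterlim_locally. intros eps. exists eps. intros y [Hy _]. exact Hy.
Qed.

Lemma is_series_Im (u : nat -> C) (l : C) :
  @is_series C_AbsRing C_NormedModule u l -> is_series (fun k => Im (u k)) (Im l).
Proof.
  intros H. apply filterlim_ext with (fun n => Im (sum_n u n)).
  - intros n. rewrite sum_n_Im. reflexivity.
  - eapply filterlim_comp; [exact H|].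
    apply filterlim_locally. intros eps. exists eps. intros y [_ Hy]. exact Hy.
Qed.

Lemma has_psum_psum u z l : has_psum u z l -> psum u z = l.
Proof.
  intros H. unfold psum.
  rewrite (is_series_unique _ _ (is_series_Re _ _ H)).
  rewrite (is_series_unique _ _ (is_series_Im _ _ H)).
  destruct l; reflexivity.
Qed.

Lemma has_psum_plus u v z lu lv : has_psum u z lu -> has_psum v z lv ->
  has_psum (fun k => u k + v k) z (lu + lv).
Proof.
  intros Hu Hv. eapply is_series_ext; [|exact (is_series_plus _ _ _ _ Hu Hv)].
  intros n. simpl.
  change (u n * z ^ n + v n * z ^ n = (u n + v n) * z ^ n). ring.
Qed.

Lemma has_psum_scal s u z l : has_psum u z l -> has_psum (fun k => s * u k) z (s * l).
Proof.
  intros Hu. eapply is_series_ext; [|exact (is_series_scal s _ _ Hu)].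
  intros n. simpl. change (s * (u n * z ^ n) = s * u n * z ^ n). ring.
Qed.

Lemma has_psum_minus u v z lu lv : has_psum u z lu -> has_psum v z lv ->
  has_psum (fun k => u k - v k) z (lu - lv).
Proof.
  intros Hu Hv. apply (has_psum_plus u (fun k => -1 * v k) z lu (-1 * lv)) in Hu.
  - eapply is_series_ext; [|replace (lu - lv) with (lu + -1 * lv) by ring; exact Hu].
    intros n. simpl. ring.
  - apply has_psum_scal, Hv.
Qed.

(* A series with vanishing coefficients sums to 0: this turns each
   coefficient relation into a relation between sums. *)
Lemma has_psum_null (u : nat -> C) (z l : C) :
  (forall k, u k = 0) -> has_psum u z l -> l = 0.
Proof.
  intros Hu H. rewrite <- (has_psum_psum _ _ _ H). apply has_psum_psum.
  apply filterlim_ext with (fun _ => zero : C).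
  - intros n. induction n as [|n IH].
    + rewrite sum_O, Hu. change (0 = 0 * 1 :> C). ring.
    + rewrite sum_Sn, <- IH, Hu. change (0 = 0 + 0 * z ^ S n :> C). ring.
  - apply filterlim_const.
Qed.

Lemma has_psum_shift u z l : has_psum u z l -> has_psum (shift_coef u) z (z * l).
Proof.
  intros H. apply is_series_decr_1.
  match goal with |- is_series _ ?L => replace L with (scal z l) end.
  2: { change (z * l = z * l + - (0 * 1)). ring. }
  eapply is_series_ext; [|exact (is_series_scal z _ _ H)].
  intros n. simpl. change (z * (u n * z ^ n) = u n * (z * z ^ n)). ring.
Qed.

Lemma has_psum_euler u z l :
  has_psum (deriv_coef u) z l -> has_psum (euler_coef u) z (z * l).
Proof.
  intros H. apply has_psum_shift in H. eapply is_series_ext; [|exact H].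
  intros [|k]; unfold shift_coef, euler_coef, deriv_coef; simpl; ring.
Qed.

Lemma has_psum_of_ex_series (u : nat -> C) (z : C) :
  ex_series (K := C_AbsRing) (V := C_CompleteNormedModule) (fun k => u k * z ^ k) ->
  has_psum u z (psum u z).
Proof. intros [l Hl]. rewrite (has_psum_psum u z l Hl). exact Hl. Qed.

Lemma has_psum_deriv_terms u z l : has_psum (deriv_coef u) z l ->
  @is_series C_AbsRing C_NormedModule (fun k => RtoC (INR k) * u k * z ^ pred k) l.
Proof.
  intros H. apply is_series_decr_1.
  match goal with |- is_series _ ?L => replace L with l end.
  2: { change (l = l + - (RtoC (INR 0) * u 0%nat * z ^ 0)). simpl. ring. }
  eapply is_series_ext; [|exact H]. intros n. unfold deriv_coef. simpl. ring.
Qed.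

Lemma Cmod_sum_n_le (u : nat -> C) (v : nat -> R) n :
  (forall k, Cmod (u k) <= v k) -> Cmod (@sum_n C_AbelianMonoid u n) <= sum_n v n.
Proof.
  intros Hv. induction n as [|n IH].
  - rewrite !sum_O. apply Hv.
  - rewrite !sum_Sn. eapply Rle_trans; [apply Cmod_triangle|].
    change (plus (sum_n v n) (v (S n))) with (sum_n v n + v (S n))%R.
    apply Rplus_le_compat; auto.
Qed.

Lemma Cmod_series_le (u : nat -> C) (l : C) (v : nat -> R) (lv : R) :
  @is_series C_AbsRing C_NormedModule u l -> (forall k, Cmod (u k) <= v k) ->
  is_series v lv -> Cmod l <= lv.
Proof.
  intros Hu Hv Hlv.
  assert (L : is_lim_seq (fun n => Cmod (@sum_n C_AbelianMonoid u n)) (Cmod l)).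
  { eapply filterlim_comp; [exact Hu|].
    apply (filterlim_norm (K := C_AbsRing) (V := C_NormedModule)). }
  assert (Lv : is_lim_seq (sum_n v) lv) by exact Hlv.
  exact (is_lim_seq_le _ _ _ _ (fun n => Cmod_sum_n_le u v n Hv) L Lv).
Qed.

(* The remainder of the linear approximation of w^k at z,
   w^k - z^k - k z^(k-1) (w-z), satisfies a simple recursion, which gives the
   quadratic bound |.| r^2 <= k^2 r^k |w-z|^2 on the closed disk of radius r. *)
Lemma pow_remainder_rec (w z : C) k :
  w ^ S k - z ^ S k - RtoC (INR (S k)) * z ^ pred (S k) * (w - z)
  = w * (w ^ k - z ^ k - RtoC (INR k) * z ^ pred k * (w - z))
    + RtoC (INR k) * z ^ pred k * ((w - z) * (w - z)).
Proof.
  destruct k.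
  - simpl. ring.
  - rewrite RtoC_INR_S. simpl pred. rewrite !Cpow_S. ring.
Qed.

Lemma pow_pred_le (z : C) (r : R) k : (0 <= r)%R -> Cmod z <= r ->
  (INR k * Cmod z ^ pred k * r ^ 2 <= INR k * r ^ S k)%R.
Proof.
  intros Hr Hz. destruct k as [|k].
  - simpl. lra.
  - simpl pred. rewrite Rmult_assoc.
    replace (r ^ S (S k))%R with (r ^ k * r ^ 2)%R by (simpl; ring).
    apply Rmult_le_compat_l; [apply pos_INR|].
    apply Rmult_le_compat_r; [apply pow_le; auto|].
    apply pow_incr. split; auto. apply Cmod_ge_0.
Qed.

Lemma pow_remainder_bound (w z : C) (r : R) k :
  (0 <= r)%R -> Cmod w <= r -> Cmod z <= r ->
  (Cmod (w ^ k - z ^ k - RtoC (INR k) * z ^ pred k * (w - z)) * r ^ 2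
    <= INR k ^ 2 * r ^ k * Cmod (w - z) ^ 2)%R.
Proof.
  intros Hr Hw Hz. induction k as [|k IH].
  { simpl. replace (1 - 1 - RtoC 0 * 1 * (w - z)) with (RtoC 0) by ring.
    rewrite Cmod_0. lra. }
  rewrite pow_remainder_rec.
  set (E := Cmod (w ^ k - z ^ k - RtoC (INR k) * z ^ pred k * (w - z))) in *.
  set (d := Cmod (w - z)).
  assert (Hd : (0 <= d)%R) by apply Cmod_ge_0.
  assert (HE : (0 <= E)%R) by apply Cmod_ge_0.
  assert (Htri : (Cmod (w * (w ^ k - z ^ k - RtoC (INR k) * z ^ pred k * (w - z))
                        + RtoC (INR k) * z ^ pred k * ((w - z) * (w - z)))
                  <= Cmod w * E + INR k * Cmod z ^ pred k * (d * d))%R).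
  { eapply Rle_trans; [apply Cmod_triangle|].
    rewrite !Cmod_mult, Cmod_pow, Cmod_R, Rabs_pos_eq by apply pos_INR.
    fold E d. lra. }
  assert (Hfirst : (Cmod w * E * r ^ 2 <= r * (INR k ^ 2 * r ^ k * d ^ 2))%R).
  { rewrite Rmult_assoc. apply Rmult_le_compat; auto using Cmod_ge_0.
    apply Rmult_le_pos; auto. apply pow_le; auto. }
  assert (Hsecond : (INR k * Cmod z ^ pred k * (d * d) * r ^ 2 <= INR k * r ^ S k * (d * d))%R).
  { replace (INR k * Cmod z ^ pred k * (d * d) * r ^ 2)%R
      with (INR k * Cmod z ^ pred k * r ^ 2 * (d * d))%R by ring.
    apply Rmult_le_compat_r; [nra|]. apply pow_pred_le; auto. }
  assert (Hk : (0 <= INR k)%R) by apply pos_INR.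
  assert (Hrk : (0 <= r * r ^ k * (d * d))%R).
  { apply Rmult_le_pos; [apply Rmult_le_pos; [|apply pow_le]|apply Rmult_le_pos]; auto. }
  apply Rle_trans with ((Cmod w * E + INR k * Cmod z ^ pred k * (d * d)) * r ^ 2)%R.
  { apply Rmult_le_compat_r; auto. apply pow_le; auto. }
  rewrite S_INR. simpl pow in *. nra.
Qed.

Lemma is_derive_of_quadratic_bound (F : C -> C) (z L : C) (M delta : R) :
  (0 < delta)%R -> (0 <= M)%R ->
  (forall w, Cmod (w - z) < delta ->
     Cmod (F w - F z - (w - z) * L) <= M * Cmod (w - z) ^ 2) ->
  @is_derive C_AbsRing C_NormedModule F z L.
Proof.
  intros Hd HM HB. split; [apply is_linear_scal_l|].
  intros x Hx.
  assert (Ex : z = x)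
    by exact (is_filter_lim_locally_unique (K := C_AbsRing)
                (V := AbsRing_NormedModule C_AbsRing) _ _ Hx).
  subst x. intros eps.
  assert (Hp : (0 < Rmin delta (eps / (M + 1)))%R).
  { apply Rmin_pos; auto. apply Rdiv_lt_0_compat; [apply cond_pos|lra]. }
  exists (mkposreal _ Hp). intros w Hw.
  change (Cmod (w - z) < Rmin delta (eps / (M + 1)))%R in Hw.
  change (Cmod (F w - F z - (w - z) * L) <= eps * Cmod (w - z))%R.
  assert (H1 : Cmod (w - z) < delta) by (eapply Rlt_le_trans; [exact Hw|apply Rmin_l]).
  assert (H2 : (Cmod (w - z) < eps / (M + 1))%R)
    by (eapply Rlt_le_trans; [exact Hw|apply Rmin_r]).
  eapply Rle_trans; [apply HB; auto|].
  assert (Hc : (0 <= Cmod (w - z))%R) by apply Cmod_ge_0.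
  assert (H3 : (M * Cmod (w - z) <= eps)%R).
  { apply Rmult_lt_compat_l with (r := (M + 1)%R) in H2; [|lra].
    replace ((M + 1) * (eps / (M + 1)))%R with (pos eps) in H2 by (field; lra). nra. }
  simpl. nra.
Qed.

(* Summability of (k+1)^2 |u_k| r^k: enough to sum the series and its derivative
   on the open disk of radius r, and to dominate the remainders above. *)
Definition weighted_summable (u : nat -> C) (r : R) : Prop :=
  ex_series (fun k => INR (S k) ^ 2 * Cmod (u k) * r ^ k)%R.

Lemma weighted_nonneg (u : nat -> C) (r : R) k :
  (0 <= r)%R -> (0 <= INR (S k) ^ 2 * Cmod (u k) * r ^ k)%R.
Proof.
  intros Hr. apply Rmult_le_pos; [apply Rmult_le_pos; [apply pow2_ge_0|apply Cmod_ge_0]|].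
  apply pow_le, Hr.
Qed.

Lemma has_psum_weighted u w r : (0 <= r)%R -> Cmod w <= r ->
  weighted_summable u r -> has_psum u w (psum u w).
Proof.
  intros Hr Hw Hs. apply has_psum_of_ex_series.
  eapply ex_series_le; [|exact Hs]. intros n.
  change (norm (u n * w ^ n)) with (Cmod (u n * w ^ n)).
  rewrite Cmod_mult, Cmod_pow.
  assert (0 <= Cmod (u n))%R by apply Cmod_ge_0.
  assert (Cmod w ^ n <= r ^ n)%R by (apply pow_incr; split; auto; apply Cmod_ge_0).
  assert (1 <= INR (S n) ^ 2)%R by (rewrite S_INR; pose proof (pos_INR n); nra).
  assert (0 <= Cmod (u n) * r ^ n)%R by (apply Rmult_le_pos; [|apply pow_le]; auto).
  apply Rle_trans with (Cmod (u n) * r ^ n)%R; [apply Rmult_le_compat_l; auto|nra].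
Qed.

Lemma has_psum_deriv_weighted u z r : Cmod z < r -> weighted_summable u r ->
  has_psum (deriv_coef u) z (psum (deriv_coef u) z).
Proof.
  intros Hz Hs.
  assert (Hr : (0 < r)%R) by (eapply Rle_lt_trans; [apply Cmod_ge_0|exact Hz]).
  apply has_psum_of_ex_series.
  apply (ex_series_le _ (fun k => / r * (INR (S (S k)) ^ 2 * Cmod (u (S k)) * r ^ (S k)))%R).
  - intros n. change (norm (deriv_coef u n * z ^ n)) with (Cmod (deriv_coef u n * z ^ n)).
    unfold deriv_coef. rewrite !Cmod_mult, Cmod_pow, Cmod_R, Rabs_pos_eq by apply pos_INR.
    replace (/ r * (INR (S (S n)) ^ 2 * Cmod (u (S n)) * r ^ S n))%R
      with (INR (S (S n)) ^ 2 * Cmod (u (S n)) * r ^ n)%R by (simpl; field; lra).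
    assert (0 <= Cmod (u (S n)))%R by apply Cmod_ge_0.
    assert (Cmod z ^ n <= r ^ n)%R by (apply pow_incr; split; [apply Cmod_ge_0|lra]).
    assert (INR (S n) <= INR (S (S n)) ^ 2)%R
      by (rewrite !S_INR; pose proof (pos_INR n); nra).
    assert (0 <= INR (S n))%R by apply pos_INR.
    apply Rle_trans with (INR (S n) * Cmod (u (S n)) * r ^ n)%R.
    + apply Rmult_le_compat_l; auto. apply Rmult_le_pos; auto.
    + apply Rmult_le_compat_r; [apply pow_le; lra|]. apply Rmult_le_compat_r; auto.
  - apply (ex_series_scal (V := R_NormedModule) (/ r)%R).
    apply (ex_series_incr_1 (fun k => INR (S k) ^ 2 * Cmod (u k) * r ^ k)%R). exact Hs.
Qed.

Lemma psum_remainder_term_bound (u : nat -> C) (w z : C) (r : R) k :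
  (0 < r)%R -> Cmod w <= r -> Cmod z <= r ->
  (Cmod (u k * w ^ k - u k * z ^ k - (w - z) * (RtoC (INR k) * u k * z ^ pred k))
   <= INR (S k) ^ 2 * Cmod (u k) * r ^ k * (Cmod (w - z) ^ 2 / r ^ 2))%R.
Proof.
  intros Hr Hw Hz.
  replace (u k * w ^ k - u k * z ^ k - (w - z) * (RtoC (INR k) * u k * z ^ pred k))
    with (u k * (w ^ k - z ^ k - RtoC (INR k) * z ^ pred k * (w - z))) by ring.
  rewrite Cmod_mult.
  pose proof (pow_remainder_bound w z r k (Rlt_le _ _ Hr) Hw Hz) as Hb.
  set (E := Cmod (w ^ k - z ^ k - RtoC (INR k) * z ^ pred k * (w - z))) in *.
  set (d := Cmod (w - z)) in *.
  assert (Hr2 : (0 < r ^ 2)%R) by (apply pow_lt; lra).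
  assert (HE : (E <= INR (S k) ^ 2 * r ^ k * (d ^ 2 / r ^ 2))%R).
  { apply Rmult_le_reg_r with (r ^ 2)%R; auto.
    replace (INR (S k) ^ 2 * r ^ k * (d ^ 2 / r ^ 2) * r ^ 2)%R
      with (INR (S k) ^ 2 * r ^ k * d ^ 2)%R by (field; lra).
    assert (INR k ^ 2 <= INR (S k) ^ 2)%R by (rewrite S_INR; pose proof (pos_INR k); nra).
    assert (0 <= r ^ k * d ^ 2)%R by (apply Rmult_le_pos; apply pow_le; [lra|apply Cmod_ge_0]).
    nra. }
  replace (INR (S k) ^ 2 * Cmod (u k) * r ^ k * (d ^ 2 / r ^ 2))%R
    with (Cmod (u k) * (INR (S k) ^ 2 * r ^ k * (d ^ 2 / r ^ 2)))%R by ring.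
  apply Rmult_le_compat_l; [apply Cmod_ge_0|exact HE].
Qed.

Lemma psum_derive u z r : Cmod z < r -> weighted_summable u r ->
  @is_derive C_AbsRing C_NormedModule (psum u) z (psum (deriv_coef u) z).
Proof.
  intros Hz Hs.
  assert (Hr : (0 < r)%R) by (eapply Rle_lt_trans; [apply Cmod_ge_0|exact Hz]).
  set (L := psum (deriv_coef u) z).
  pose proof (has_psum_deriv_terms _ _ _ (has_psum_deriv_weighted u z r Hz Hs)) as HL.
  set (K := Series (fun k => INR (S k) ^ 2 * Cmod (u k) * r ^ k)%R).
  apply is_derive_of_quadratic_bound
    with (delta := (r - Cmod z)%R) (M := Rmax 0 (K / r ^ 2)); [lra|apply Rmax_l|].
  intros w Hw.
  assert (Hwr : Cmod w <= r).
  { replace w with (z + (w - z)) by ring. eapply Rle_trans; [apply Cmod_triangle|]. lra. }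
  pose proof (is_series_minus _ _ _ _
    (is_series_minus _ _ _ _ (has_psum_weighted u w r (Rlt_le _ _ Hr) Hwr Hs)
                             (has_psum_weighted u z r (Rlt_le _ _ Hr) (Rlt_le _ _ Hz) Hs))
    (is_series_scal (w - z) _ _ HL)) as Hdiff.
  pose proof (is_series_scal_r (Cmod (w - z) ^ 2 / r ^ 2)%R _ _ (Series_correct _ Hs)) as Hmaj.
  apply Rle_trans with (K * (Cmod (w - z) ^ 2 / r ^ 2))%R.
  - eapply Cmod_series_le; [exact Hdiff| |exact Hmaj].
    intros k. apply psum_remainder_term_bound; auto. lra.
  - replace (K * (Cmod (w - z) ^ 2 / r ^ 2))%R with (K / r ^ 2 * Cmod (w - z) ^ 2)%R
      by (field; lra).
    apply Rmult_le_compat_r; [apply pow_le, Cmod_ge_0|apply Rmax_r].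
Qed.

Lemma ex_series_ratio_eventually (v : nat -> R) (rho : R) N :
  (0 <= rho < 1)%R -> (forall k, 0 <= v k)%R ->
  (forall k, (N <= k)%nat -> v (S k) <= rho * v k)%R -> ex_series v.
Proof.
  intros Hrho Hv Hk. apply (ex_series_incr_n v N).
  apply (ex_series_le (K := R_AbsRing) (V := R_CompleteNormedModule) _
           (fun j => v N * rho ^ j)%R).
  - intros j. change (Rabs (v (N + j)%nat) <= v N * rho ^ j)%R.
    rewrite Rabs_pos_eq by auto.
    induction j as [|j IH].
    + rewrite Nat.add_0_r. simpl. lra.
    + replace (N + S j)%nat with (S (N + j)) by lia.
      eapply Rle_trans; [apply Hk; lia|].
      simpl. assert (0 <= rho)%R by lra. nra.
  - apply (ex_series_scal (K := R_AbsRing) (V := R_NormedModule) (v N)).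
    apply ex_series_geom. rewrite Rabs_pos_eq; lra.
Qed.

Lemma weighted_summable_finite (u : nat -> C) (N : nat) (r : R) :
  (0 <= r)%R -> (forall k, (N <= k)%nat -> u k = 0) -> weighted_summable u r.
Proof.
  intros Hr Hu. apply (ex_series_ratio_eventually _ 0 N); [lra|auto using weighted_nonneg|].
  intros k Hk. rewrite (Hu k), (Hu (S k)), Cmod_0 by lia. lra.
Qed.

Lemma eventually_INR_ge (X : R) : exists N, forall k, (N <= k)%nat -> (X <= INR k)%R.
Proof.
  destruct (INR_archimed 1 X) as [N HN]; [lra|].
  exists N. intros k Hk. apply le_INR in Hk. lra.
Qed.

Lemma hypcoef_ratio_bound a b c k : poch c (S k) <> 0 ->
  let A := (Cmod a + Cmod b + Cmod c)%R in
  (A < INR k)%R ->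
  (Cmod (hypcoef a b c (S k)) * ((INR k - A) * (INR k + 1))
   <= Cmod (hypcoef a b c k) * (INR k + A) ^ 2)%R.
Proof.
  intros Hc A Hk.
  pose proof (hypcoef_succ a b c k Hc) as E. apply (f_equal Cmod) in E.
  rewrite !Cmod_mult in E.
  replace (RtoC (INR k) + 1) with (RtoC (INR k + 1)) in E by (rewrite RtoC_plus; reflexivity).
  rewrite Cmod_R, (Rabs_pos_eq (INR k + 1)) in E by (pose proof (pos_INR k); lra).
  pose proof (Cmod_ge_0 a); pose proof (Cmod_ge_0 b); pose proof (Cmod_ge_0 c).
  assert (Ba : (Cmod (a + RtoC (INR k)) <= INR k + A)%R).
  { eapply Rle_trans; [apply Cmod_triangle|]. rewrite Cmod_INR. unfold A. lra. }
  assert (Bb : (Cmod (b + RtoC (INR k)) <= INR k + A)%R).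
  { eapply Rle_trans; [apply Cmod_triangle|]. rewrite Cmod_INR. unfold A. lra. }
  assert (Bc : (INR k - A <= Cmod (c + RtoC (INR k)))%R).
  { assert (INR k <= Cmod (c + RtoC (INR k)) + Cmod c)%R.
    { rewrite <- (Cmod_INR k) at 1.
      replace (RtoC (INR k)) with ((c + RtoC (INR k)) + - c) at 1 by ring.
      eapply Rle_trans; [apply Cmod_triangle|]. rewrite Cmod_opp. lra. }
    unfold A. lra. }
  pose proof (Cmod_ge_0 (hypcoef a b c (S k))). pose proof (Cmod_ge_0 (hypcoef a b c k)).
  pose proof (Cmod_ge_0 (a + RtoC (INR k))). pose proof (Cmod_ge_0 (b + RtoC (INR k))).
  pose proof (pos_INR k).
  apply Rle_trans with (Cmod (hypcoef a b c (S k)) * (Cmod (c + RtoC (INR k)) * (INR k + 1)))%R.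
  { apply Rmult_le_compat_l; auto. apply Rmult_le_compat_r; lra. }
  rewrite E. apply Rmult_le_compat_l; auto. simpl. rewrite Rmult_1_r.
  apply Rmult_le_compat; auto.
Qed.

Lemma slack_growth (r : R) : (0 <= r < 1)%R ->
  (r * (1 + (1 - r) / 16) ^ 4 <= (1 + r) / 2)%R.
Proof.
  intros Hr. set (d := ((1 - r) / 16)%R).
  assert (Hd : (0 < d <= 1 / 16)%R) by (unfold d; lra).
  assert (Hd2 : (d * d <= d / 16)%R) by nra.
  assert (Hd3 : (d * d * d <= d * d / 16)%R) by nra.
  assert (Hpoly : (d * (6 * d + 4 * (d * d) + d * d * d) <= d)%R) by nra.
  assert (Ht : ((1 + d) ^ 4 <= 1 + 5 * d)%R).
  { replace ((1 + d) ^ 4)%R with (1 + 4 * d + d * (6 * d + 4 * (d * d) + d * d * d))%R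
      by ring. lra. }
  assert (r * (1 + d) ^ 4 <= r * (1 + 5 * d))%R by (apply Rmult_le_compat_l; lra).
  assert (0 <= (1 - r) * (8 - 5 * r))%R by (apply Rmult_le_pos; lra).
  unfold d in *. nra.
Qed.

Lemma slack_factor_bounds (r x A : R) :
  (0 <= A)%R -> (0 <= r < 1)%R -> (16 * (2 * A + 1) <= (1 - r) * (x - A))%R ->
  let t := (1 + (1 - r) / 16)%R in
  (0 < x - A /\ x + 2 <= t * (x + 1) /\ x + A <= t * (x + 1) /\
   x + A <= t * (x - A))%R.
Proof.
  intros HA Hr Hx t.
  assert (HxA : (0 < x - A)%R).
  { destruct (Rle_or_lt (x - A) 0) as [H|H]; [|exact H].
    assert (0 <= (1 - r) * (A - x))%R by (apply Rmult_le_pos; lra). lra. }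
  assert (K : (16 * (2 * A + 1) <= (1 - r) * (x + 1))%R).
  { assert (0 <= (1 - r) * (A + 1))%R by (apply Rmult_le_pos; lra).
    replace ((1 - r) * (x + 1))%R with ((1 - r) * (x - A) + (1 - r) * (A + 1))%R by ring.
    lra. }
  assert (Et1 : (t * (x + 1) = x + 1 + (1 - r) * (x + 1) / 16)%R) by (unfold t; field).
  assert (Et2 : (t * (x - A) = x - A + (1 - r) * (x - A) / 16)%R) by (unfold t; field).
  repeat split; lra.
Qed.

(* The ratio estimate of [hypcoef_ratio_bound] turns into a contraction of
   the weighted terms (k+1)^2 |u_k| r^k by the factor (1+r)/2. *)
Lemma ratio_step_bound (p q r x A : R) :
  (0 <= p)%R -> (0 <= q)%R -> (0 <= A)%R -> (0 <= r < 1)%R ->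
  (16 * (2 * A + 1) <= (1 - r) * (x - A))%R ->
  (p * ((x - A) * (x + 1)) <= q * (x + A) ^ 2)%R ->
  ((x + 2) ^ 2 * p * r <= (1 + r) / 2 * ((x + 1) ^ 2 * q))%R.
Proof.
  intros Hp Hq HA Hr Hx Hpq.
  destruct (slack_factor_bounds r x A HA Hr Hx) as (HxA & T1 & T2 & T3).
  set (t := (1 + (1 - r) / 16)%R) in *.
  pose proof (slack_growth r Hr) as Ht4. fold t in Ht4.
  assert (Hpos : (0 < (x - A) * (x + 1))%R) by nra.
  apply Rmult_le_reg_r with ((x - A) * (x + 1))%R; auto.
  assert (S1 : ((x + 2) ^ 2 * p * r * ((x - A) * (x + 1))
                <= r * q * ((x + 2) ^ 2 * (x + A) ^ 2))%R).
  { replace ((x + 2) ^ 2 * p * r * ((x - A) * (x + 1)))%R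
      with (r * (x + 2) ^ 2 * (p * ((x - A) * (x + 1))))%R by ring.
    replace (r * q * ((x + 2) ^ 2 * (x + A) ^ 2))%R
      with (r * (x + 2) ^ 2 * (q * (x + A) ^ 2))%R by ring.
    apply Rmult_le_compat_l; [apply Rmult_le_pos; [lra|apply pow2_ge_0]|exact Hpq]. }
  assert (S2 : ((x + 2) ^ 2 * (x + A) ^ 2 <= t ^ 4 * ((x + 1) ^ 3 * (x - A)))%R).
  { replace (t ^ 4 * ((x + 1) ^ 3 * (x - A)))%R
      with ((t * (x + 1)) ^ 2 * ((t * (x + 1)) * (t * (x - A))))%R by ring.
    assert (0 <= x + 2)%R by lra. assert (0 <= x + A)%R by lra.
    apply Rmult_le_compat; [apply pow2_ge_0|apply pow2_ge_0|apply pow_incr; lra|].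
    simpl. rewrite Rmult_1_r. apply Rmult_le_compat; lra. }
  assert (0 <= r * q)%R by nra.
  assert (0 <= (x + 1) ^ 3 * (x - A))%R by (apply Rmult_le_pos; [apply pow_le|]; lra).
  apply Rle_trans with (r * q * (t ^ 4 * ((x + 1) ^ 3 * (x - A))))%R.
  { eapply Rle_trans; [exact S1|]. apply Rmult_le_compat_l; auto. }
  replace ((1 + r) / 2 * ((x + 1) ^ 2 * q) * ((x - A) * (x + 1)))%R
    with ((1 + r) / 2 * (q * ((x + 1) ^ 3 * (x - A))))%R by ring.
  replace (r * q * (t ^ 4 * ((x + 1) ^ 3 * (x - A))))%R
    with (r * t ^ 4 * (q * ((x + 1) ^ 3 * (x - A))))%R by ring.
  apply Rmult_le_compat_r; [apply Rmult_le_pos|]; auto.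
Qed.

Lemma weighted_summable_hypcoef a b c r :
  (forall k, poch c k <> 0) -> (0 <= r < 1)%R -> weighted_summable (hypcoef a b c) r.
Proof.
  intros Hc Hr.
  set (A := (Cmod a + Cmod b + Cmod c)%R).
  assert (HA : (0 <= A)%R)
    by (unfold A; pose proof (Cmod_ge_0 a); pose proof (Cmod_ge_0 b); pose proof (Cmod_ge_0 c); lra).
  destruct (eventually_INR_ge (A + 16 * (2 * A + 1) / (1 - r))) as [N HN].
  apply (ex_series_ratio_eventually _ ((1 + r) / 2) N); [lra|intros; apply weighted_nonneg; lra|].
  intros k Hk. pose proof (HN k Hk) as Hx.
  assert (Hx' : (16 * (2 * A + 1) <= (1 - r) * (INR k - A))%R).
  { assert (16 * (2 * A + 1) / (1 - r) <= INR k - A)%R by lra.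
    apply Rmult_le_compat_l with (r := (1 - r)%R) in H; [|lra].
    replace ((1 - r) * (16 * (2 * A + 1) / (1 - r)))%R with (16 * (2 * A + 1))%R in H
      by (field; lra). exact H. }
  assert (HkA : (A < INR k)%R) by nra.
  pose proof (hypcoef_ratio_bound a b c k (Hc (S k)) HkA) as Hrat. fold A in Hrat.
  pose proof (ratio_step_bound _ _ r _ A (Cmod_ge_0 _) (Cmod_ge_0 (hypcoef a b c k)) HA Hr Hx' Hrat)
    as Hstep.
  rewrite !S_INR. replace (r ^ S k)%R with (r * r ^ k)%R by reflexivity.
  replace ((INR k + 1 + 1) ^ 2 * Cmod (hypcoef a b c (S k)) * (r * r ^ k))%R
    with ((INR k + 2) ^ 2 * Cmod (hypcoef a b c (S k)) * r * r ^ k)%R by ring.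
  replace ((1 + r) / 2 * ((INR k + 1) ^ 2 * Cmod (hypcoef a b c k) * r ^ k))%R
    with ((1 + r) / 2 * ((INR k + 1) ^ 2 * Cmod (hypcoef a b c k)) * r ^ k)%R by ring.
  apply Rmult_le_compat_r; [apply pow_le; lra|exact Hstep].
Qed.

Lemma has_psum_operators u z r : Cmod z < r -> weighted_summable u r ->
  has_psum u z (psum u z) /\ has_psum (deriv_coef u) z (psum (deriv_coef u) z) /\
  has_psum (euler_coef u) z (z * psum (deriv_coef u) z) /\
  has_psum (shift_coef u) z (z * psum u z) /\
  has_psum (shift_coef (euler_coef u)) z (z * (z * psum (deriv_coef u) z)).
Proof.
  intros Hz Hs.
  assert (Hr : (0 <= r)%R) by (pose proof (Cmod_ge_0 z); lra).
  pose proof (has_psum_weighted u z r Hr (Rlt_le _ _ Hz) Hs) as H0.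
  pose proof (has_psum_deriv_weighted u z r Hz Hs) as HD.
  pose proof (has_psum_euler _ _ _ HD) as HE.
  repeat split; auto using has_psum_shift.
Qed.

Ltac combine_psums :=
  repeat lazymatch goal with
  | |- has_psum (fun k => _ - _) _ _ => apply has_psum_minus
  | |- has_psum (fun k => _ + _) _ _ => apply has_psum_plus
  | |- has_psum (fun k => ?s * ?u k) _ _ => apply (has_psum_scal s u)
  | H : has_psum ?u ?z _ |- has_psum (fun k => ?u k) ?z _ => exact H
  | H : has_psum ?u ?z _ |- has_psum ?u ?z _ => exact H
  end.

Lemma wronskian_psum (a b c z : C) (r : R) :
  admissible a c -> c = a - b + 1 -> (b <> 0 \/ 1 - z <> 0) -> Cmod z < r ->
  weighted_summable (hypcoef a b c) r -> weighted_summable (hypcoef a (b + 1) (c + 1)) r ->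
  weighted_summable (hypcoef a (b - 1) (c - 1)) r ->
  let f := psum (hypcoef a (b + 1) (c + 1)) in
  let g := psum (hypcoef a (b - 1) (c - 1)) in
  let h := psum (hypcoef a b c) in
  z * (f z * psum (deriv_coef (hypcoef a (b - 1) (c - 1))) z
       - psum (deriv_coef (hypcoef a (b + 1) (c + 1))) z * g z)
  = c * (f z * g z - h z * h z).
Proof.
  intros Hadm Ec Hnd Hz Sh Sf Sg f g h.
  destruct (has_psum_operators _ z r Hz Sh) as (H0 & HD & HE & HS & HSE).
  destruct (has_psum_operators _ z r Hz Sf) as (F0 & FD & FE & FS & FSE).
  destruct (has_psum_operators _ z r Hz Sg) as (G0 & GD & GE & GS & GSE).
  apply (wronskian_elimination a b c) with (hp := psum (deriv_coef (hypcoef a b c)) z); auto.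
  - exact (proj2 (admissible_c_neq0 a c Hadm)).
  - apply (has_psum_null _ z _ (contiguous_A a b c Hadm)). combine_psums.
  - apply (has_psum_null _ z _ (contiguous_B a b c Hadm)). combine_psums.
  - apply (has_psum_null _ z _ (contiguous_C a b c Hadm)). combine_psums.
  - apply (has_psum_null _ z _ (contiguous_R1 a b c Hadm)). combine_psums.
  - apply (has_psum_null _ z _ (contiguous_R2 a b c Hadm)). combine_psums.
Qed.

Definition wronskian_holds (a b c z : C) : Prop :=
  exists f' g' : C,
    is_derive (fun w => hypF a (b + 1) (c + 1) w) z f' /\
    is_derive (fun w => hypF a (b - 1) (c - 1) w) z g' /\
    z * (hypF a (b + 1) (c + 1) z * g' - f' * hypF a (b - 1) (c - 1) z)
    = c * (hypF a (b + 1) (c + 1) z * hypF a (b - 1) (c - 1) z - hypF a b c z * hypF a b c z).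

Lemma wronskian_hypF (a b c z : C) (r : R) :
  admissible a c -> c = a - b + 1 -> (b <> 0 \/ 1 - z <> 0) -> Cmod z < r ->
  weighted_summable (hypcoef a b c) r -> weighted_summable (hypcoef a (b + 1) (c + 1)) r ->
  weighted_summable (hypcoef a (b - 1) (c - 1)) r ->
  wronskian_holds a b c z.
Proof.
  intros Hadm Ec Hnd Hz Sh Sf Sg.
  exists (psum (deriv_coef (hypcoef a (b + 1) (c + 1))) z),
         (psum (deriv_coef (hypcoef a (b - 1) (c - 1))) z).
  rewrite !hypF_psum. split; [|split].
  - apply is_derive_ext with (psum (hypcoef a (b + 1) (c + 1))).
    { intros w. symmetry. apply hypF_psum. }
    exact (psum_derive _ z r Hz Sf).
  - apply is_derive_ext with (psum (hypcoef a (b - 1) (c - 1))).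
    { intros w. symmetry. apply hypF_psum. }
    exact (psum_derive _ z r Hz Sg).
  - exact (wronskian_psum a b c z r Hadm Ec Hnd Hz Sh Sf Sg).
Qed.

Lemma wronskian_polynomial_case (a b c : C) (n : nat) (z : C) :
  c = a - b + 1 -> a = RtoC (- INR (S n)) ->
  (forall k : nat, (k <= S (S n))%nat -> c <> a + RtoC (INR k)) ->
  wronskian_holds a b c z.
Proof.
  intros Ec Ha Hk.
  assert (Hb : b <> 0).
  { intros Eb. apply (Hk 1%nat); [lia|]. rewrite Ec, Eb. simpl. ring. }
  assert (Htail : forall b' c' k, (S (S n) <= k)%nat -> hypcoef a b' c' k = 0).
  { intros b' c' k Hk'. apply hypcoef_vanish, (poch_eq0 a k (S n)); [lia|].
    rewrite Ha, RtoC_opp. ring. }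
  assert (Hr : (0 <= Cmod z + 1)%R) by (pose proof (Cmod_ge_0 z); lra).
  apply (wronskian_hypF a b c z (Cmod z + 1) (admissible_negative_integer a c n Ha Hk) Ec
           (or_introl Hb)); [lra| | |];
    apply (weighted_summable_finite _ (S (S n))); auto.
Qed.

Lemma wronskian_disk_case (a b c z : C) :
  c = a - b + 1 -> (forall m : nat, 2 - c <> RtoC (INR (S m))) -> Cmod z < 1 ->
  wronskian_holds a b c z.
Proof.
  intros Ec Hm Hz. pose proof (poch_pred_nonvanishing c Hm) as Hp.
  assert (Hc : forall k, poch c k <> 0).
  { intros k. pose proof (Hp (S k)) as H. rewrite poch_pred_S in H.
    exact (proj2 (Cmult_neq0_inv _ _ H)). }
  assert (Hc1 : forall k, poch (c + 1) k <> 0).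
  { intros k. pose proof (Hc (S k)) as H. rewrite poch_shift in H.
    exact (proj2 (Cmult_neq0_inv _ _ H)). }
  assert (Hnd : 1 - z <> 0).
  { intros E. assert (Ez : z = 1) by (replace z with (1 - (1 - z)) by ring; rewrite E; ring).
    rewrite Ez, Cmod_1 in Hz. lra. }
  set (r := ((Cmod z + 1) / 2)%R).
  assert (Hr : (0 <= r < 1)%R) by (unfold r; pose proof (Cmod_ge_0 z); lra).
  apply (wronskian_hypF a b c z r (fun k _ => Hp (S (S k))) Ec (or_intror Hnd));
    [unfold r; lra| | |]; apply weighted_summable_hypcoef; auto.
Qed.

Theorem lemma5 (a b c : C) :
  c = (a - b + 1)%C ->
  let f := fun z => hypF a (b + 1) (c + 1) z in
  let g := fun z => hypF a (b - 1) (c - 1) z in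
  let h := fun z => hypF a b c z in
  let P := fun z : C =>
    exists f' g' : C, is_derive f z f' /\ is_derive g z g' /\
      (z * (f z * g' - f' * g z) = c * (f z * g z - h z * h z))%C in
  (* a negative integer: a = -(n+1) *)
  (forall n : nat, a = RtoC (- INR (S n)) ->
     (forall k : nat, (k <= S (S n))%nat -> c <> (a + RtoC (INR k))%C) ->
     forall z : C, P z) /\
  (* a not a negative integer *)
  ((~ exists n : nat, a = RtoC (- INR (S n))) ->
     (forall m : nat, (2 - c)%C <> RtoC (INR (S m))) ->
     forall z : C, Cmod z < 1 -> P z).
Proof.
  intros Ec f g h P. split.
  - intros n Ha Hk z. exact (wronskian_polynomial_case a b c n z Ec Ha Hk).
  - intros _ Hm z Hz. exact (wronskian_disk_case a b c z Ec Hm Hz).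
Qed.
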